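(* Every Collatz trajectory $(n,C(n),C^2(n),\dots)$, $n\in\mathbb{N}^+$, that does not contain $1$ contains some element $m\equiv 6\pmod 8$.
   Context: $C:\mathbb{N}^+\to\mathbb{N}^+$ is the Collatz function $C(n)=n/2$ for $n$ even and $C(n)=3n+1$ for $n$ odd. *)

From mathcomp Require Import all_boot.

Definition collatz (n : nat) : nat := if odd n then 3 * n + 1 else n./2.

From mathcomp Require Import all_boot.
From mathcomp Require Import zify.
From Stdlib Require Import Classical.

(* Call m "admissible" when m is not congruent to 3 mod 4, i.e.
   m is even or m = 1 (mod 4).  Suppose the trajectory of an admissible m > 1
   never meets the residue class 6 mod 8.  Then a few Collatz steps lead to a
   smaller admissible number:
   - if m is even then m <> 6 (mod 8), so C(m) = m/2 < m is not 3 mod 4;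
   - if m = 4j+1 then C^2(m) = 6j+2 <> 6 (mod 8) forces j <> 2 (mod 4), so
     C^3(m) = 3j+1 < m is not 3 mod 4.
   By strong induction every such trajectory therefore reaches 1.  Finally,
   n (if even) or C(n) = 3n+1 (if odd) is admissible, so a trajectory
   avoiding both 1 and the class 6 mod 8 is impossible. *)

Lemma collatz_even m : m %% 2 = 0 -> collatz m = m %/ 2.
Proof. by rewrite /collatz divn2 modn2; case: odd. Qed.

Lemma collatz_odd m : m %% 2 = 1 -> collatz m = 3 * m + 1.
Proof. by rewrite /collatz modn2; case: odd. Qed.

Lemma iter_collatz_pos k m : 0 < m -> 0 < iter k collatz m.
Proof.
move=> m_pos; elim: k => [|k IH] //=.
have [odd_k | even_k] : iter k collatz m %% 2 = 1 \/ iter k collatz m %% 2 = 0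
  by lia.
- by rewrite collatz_odd //; lia.
- by rewrite collatz_even //; lia.
Qed.

Definition admissible (m : nat) : bool := m %% 4 != 3.

Definition avoids6 (m : nat) : Prop := forall k, iter k collatz m %% 8 <> 6.

Lemma avoids6_iter j m : avoids6 m -> avoids6 (iter j collatz m).
Proof. by move=> Hm k; rewrite -iterD; apply: Hm. Qed.

Lemma admissible_descent m :
  1 < m -> admissible m -> avoids6 m ->
  exists j, [/\ 0 < iter j collatz m, iter j collatz m < m
              & admissible (iter j collatz m)].
Proof.
rewrite /admissible => m_gt1 m_adm m_avoid.
have m_not6 := m_avoid 0; rewrite /= in m_not6.
have [m_odd | m_even] : m %% 2 = 1 \/ m %% 2 = 0 by lia.
- have m_1mod4 : m %% 4 = 1 by move: m_adm; lia.
  have C1 : collatz m = 3 * m + 1 by apply: collatz_odd.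
  have C2 : iter 2 collatz m = (3 * m + 1) %/ 2.
    by rewrite /= C1 collatz_even; lia.
  have C3 : iter 3 collatz m = (3 * m + 1) %/ 4.
    by rewrite iterS C2 collatz_even; lia.
  have C2_not6 := m_avoid 2; rewrite C2 in C2_not6.
  by exists 3; rewrite C3; split; lia.
- have C1 : iter 1 collatz m = m %/ 2 by apply: collatz_even.
  by exists 1; rewrite C1; split; lia.
Qed.

Lemma admissible_reaches_one m :
  0 < m -> admissible m -> avoids6 m -> exists k, iter k collatz m = 1.
Proof.
elim/ltn_ind: m => m IH m_pos m_adm m_avoid.
have [m_le1 | m_gt1] := leqP m 1; first by exists 0 => /=; lia.
have [j [j_pos j_lt j_adm]] := admissible_descent _ m_gt1 m_adm m_avoid.
have [k Hk] := IH _ j_lt j_pos j_adm (avoids6_iter j m m_avoid).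
by exists (k + j); rewrite iterD.
Qed.

Lemma admissible_within_one_step n :
  exists j, admissible (iter j collatz n).
Proof.
have [n_odd | n_even] : n %% 2 = 1 \/ n %% 2 = 0 by lia.
- by exists 1 => //=; rewrite collatz_odd // /admissible; lia.
- by exists 0 => //=; rewrite /admissible; lia.
Qed.

Theorem mainTheorem14 (n : nat) :
  0 < n ->
  (forall k : nat, iter k collatz n <> 1) ->
  exists k : nat, iter k collatz n %% 8 = 6.
Proof.
move=> n_pos never1; apply: NNPP => no6.
have n_avoid : avoids6 n by move=> k Hk; apply: no6; exists k.
have [j adm] := admissible_within_one_step n.
have iter_pos := iter_collatz_pos j n n_pos.
have [k Hk] := admissible_reaches_one _ iter_pos adm (avoids6_iter j n n_avoid).
by apply: (never1 (k + j)); rewrite iterD.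
Qed.
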